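(* For any finite group $G$, with $H=A\oplus B$, the bilinear form $(\cdot,\cdot)$ and the involution $x\mapsto x^*$ defined below, there exists $U\in A$ such that $\mathcal H(G)=(H=A\oplus B,(\cdot,\cdot),x\mapsto x^*,U)$ is a structure algebra.
   Context: Construction: $\mathbb C[G]$ is the group algebra, $A$ its center with basis $E_\alpha=\sum_{g\in\alpha}g$ ($\alpha$ conjugacy classes). $M(G)=\operatorname{End}(\mathbb C[G])$ with matrix units $E_{g_1,g_2}$ ($E_{g_1,g_2}(h)=\delta_{g_2,h}g_1$). For each conjugacy class $\beta$ (under simultaneous conjugation) of ordered pairs $(s_1,s_2)$ with $s_1^2=s_2^2=1$ put $E_\beta=\sum_{(s',s'')\in\beta}E_{s',s''}$; $B$ is their span. $V(g)(x)=gxg^{-1}$ extends to $V:\mathbb C[G]\to M(G)$, $V_\alpha=V(E_\alpha)$. The multiplication on $H=A\oplus B$ is that of $A$ and of $B$ plus $E_\alpha E_\beta=V_\alpha E_\beta$, $E_\beta E_\alpha=E_\beta V_\alpha$. The involution $*$ is the linear extension of $g\mapsto g^{-1}$ on $A$ and matrix transposition on $B$ (so $E_\beta^*=E_{\beta^*}$, $\beta^*$ the class of $(s_2,s_1)$). The form is $(x,y)=f(xy)$ with $f$ linear, $f(E_\alpha)=\frac{1}{|G|}\delta_{\alpha,\{1\}}$, $f(E_\beta)=\frac1{|G|}\operatorname{tr}(E_\beta)$. Structure algebra: a tuple $(H=A\oplus B,(\cdot,\cdot),*,U)$ with $H$ finite-dimensional associative over $\mathbb C$, $(\cdot,\cdot)$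 symmetric invariant ($(xy,z)=(x,yz)$), $*$ an involutive antiautomorphism, $U\in A$, such that: (1) $A$ is a subalgebra in the center of $H$ whose unit is that of $H$; (2) $B$ is a two-sided ideal with a unit; (3) $(\cdot,\cdot)|_A,(\cdot,\cdot)|_B$ nondegenerate; (4) $(V_{K_B}(b_1),b_2)=\sum F^{ij}(f_i,b_1)(f_j,b_2)$ for $b_1,b_2\in B$, where $(f_i)$ is a basis of $A$ with inverse Gram matrix $F^{ij}$ and $V_{K_B}(x)=\sum G^{kl}g_kxg_l$ for a basis $(g_k)$ of $B$ with inverse Gram matrix $G^{kl}$; (5) $A^*=A$, $B^*=B$, $(x^*,y^* )=(x,y)$; (6) $U^2=K_{A,*}$; (7) $(U,b)=(K_{B,*},b)$ for $b\in B$; (8) $(aU)^*=aU$ for $a\in A$; here $K_{X,*}=\sum F^{ij}f_if_j^*$ computed in $X=A$ or $B$. *)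

From HB Require Import structures.
From mathcomp Require Import all_boot all_order all_fingroup all_algebra.
Set Implicit Arguments. Unset Strict Implicit. Unset Printing Implicit Defensive.
Import Order.TTheory GRing.Theory Num.Theory.
Local Open Scope ring_scope.

(* The algebra H is modelled as a subspace H of an ambient finite-           *)
(* dimensional C-vector space V, with a multiplication mul : V -> V -> V     *)
(* whose restriction to H makes H an associative unital algebra.             *)
Section StructureAlgebra.
Variables (C : fieldType) (V : vectType C).

Definition gram_mx (d : nat) (form : V -> V -> C) (f : d.-tuple V) : 'M[C]_d :=
  \matrix_(i < d, j < d) form (tnth f i) (tnth f j).

Definition Kstar (mul : V -> V -> V) (form : V -> V -> C) (star : V -> V)
    (X : {vspace V}) : V :=
  let f := vbasis X in
  let F := invmx (gram_mx form f) in
  \sum_(i < \dim X) \sum_(j < \dim X) F i j *: mul (tnth f i) (star (tnth f j)).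

Definition VK (mul : V -> V -> V) (form : V -> V -> C) (X : {vspace V}) (x : V) : V :=
  let g := vbasis X in
  let G := invmx (gram_mx form g) in
  \sum_(k < \dim X) \sum_(l < \dim X) G k l *: mul (mul (tnth g k) x) (tnth g l).

Record structure_algebra (mul : V -> V -> V) (H A B : {vspace V})
    (form : V -> V -> C) (star : V -> V) (U : V) : Prop := {
  sa_dsum : (A + B)%VS = H /\ directv (A + B);
  sa_mul_closed : forall x y, x \in H -> y \in H -> mul x y \in H;
  sa_mul_linl : forall c x y z, x \in H -> y \in H -> z \in H ->
      mul (c *: x + y) z = c *: mul x z + mul y z;
  sa_mul_linr : forall c x y z, x \in H -> y \in H -> z \in H ->
      mul z (c *: x + y) = c *: mul z x + mul z y;
  sa_mul_assoc : forall x y z, x \in H -> y \in H -> z \in H ->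
      mul x (mul y z) = mul (mul x y) z;
  sa_A_subalg : forall x y, x \in A -> y \in A -> mul x y \in A;
  sa_A_central : forall a x, a \in A -> x \in H -> mul a x = mul x a;
  sa_unit : exists2 e, e \in A & forall x, x \in H -> mul e x = x /\ mul x e = x;
  sa_B_ideal : forall b x, b \in B -> x \in H -> mul x b \in B /\ mul b x \in B;
  sa_B_unit : exists2 e, e \in B & forall b, b \in B -> mul e b = b /\ mul b e = b;
  sa_form_linl : forall c x y z, x \in H -> y \in H -> z \in H ->
      form (c *: x + y) z = c * form x z + form y z;
  sa_form_sym : forall x y, x \in H -> y \in H -> form x y = form y x;
  sa_form_inv : forall x y z, x \in H -> y \in H -> z \in H ->
      form (mul x y) z = form x (mul y z);
  sa_A_nondeg : forall a, a \in A -> (forall a', a' \in A -> form a a' = 0) -> a = 0;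
  sa_B_nondeg : forall b, b \in B -> (forall b', b' \in B -> form b b' = 0) -> b = 0;
  sa_star_H : forall x, x \in H -> star x \in H;
  sa_star_lin : forall c x y, x \in H -> y \in H -> star (c *: x + y) = c *: star x + star y;
  sa_star_anti : forall x y, x \in H -> y \in H -> star (mul x y) = mul (star y) (star x);
  sa_star_invol : forall x, x \in H -> star (star x) = x;
  sa_cond4 : forall b1 b2, b1 \in B -> b2 \in B ->
      form (VK mul form B b1) b2 =
      (let f := vbasis A in let F := invmx (gram_mx form f) in
       \sum_(i < \dim A) \sum_(j < \dim A)
          F i j * form (tnth f i) b1 * form (tnth f j) b2);
  sa_star_A : forall x, x \in H -> (star x \in A) = (x \in A);
  sa_star_B : forall x, x \in H -> (star x \in B) = (x \in B);
  sa_star_form : forall x y, x \in H -> y \in H -> form (star x) (star y) = form x y;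
  sa_U_A : U \in A;
  sa_U_sq : mul U U = Kstar mul form star A;
  sa_U_form : forall b, b \in B -> form U b = form (Kstar mul form star B) b;
  sa_U_star : forall a, a \in A -> star (mul a U) = mul a U
}.

End StructureAlgebra.

(* C[G] = functions gT -> C (coefficient vectors); M(G) = End(C[G]) =        *)
(* functions gT * gT -> C, the entry at (g1,g2) being the coefficient of     *)
(* the matrix unit E_{g1,g2}. The ambient space is C[G] x M(G).              *)
Section HG.
Variables (C : numClosedFieldType) (gT : finGroupType).

Definition CG := {ffun gT -> C^o}.
Definition MG := {ffun (gT * gT)%type -> C^o}.
Definition HGamb := (CG * MG)%type.

Definition cg_mul (a b : CG) : CG :=
  [ffun g => \sum_(h : gT) a h * b (h^-1 * g)%g].

Definition mg_mul (m n : MG) : MG :=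
  [ffun p : gT * gT => \sum_(h : gT) m (p.1, h) * n (h, p.2)].

(* V(g) = sum_x E_{g x g^-1, x}, extended linearly: V(a) = sum_g a_g V(g).
   (In MathComp x ^ g^-1 = g * x * g^-1.) *)
Definition Vmap (a : CG) : MG :=
  [ffun p : gT * gT => \sum_(g : gT) a g * (p.1 == (p.2 ^ g^-1)%g)%:R].

Definition Eclass (x : gT) : CG := [ffun g => (g \in (x ^: [set: gT])%g)%:R].

Definition Epair (s1 s2 : gT) : MG :=
  [ffun p : gT * gT => [exists g : gT, (p.1 == (s1 ^ g)%g) && (p.2 == (s2 ^ g)%g)]%:R].

Definition involutive_pair (p : gT * gT) : bool :=
  ((p.1 * p.1)%g == 1%g) && ((p.2 * p.2)%g == 1%g).

Definition HG_A : {vspace HGamb} :=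
  <<[seq ((Eclass x, 0%R) : HGamb) | x <- enum gT]>>%VS.

Definition HG_B : {vspace HGamb} :=
  <<[seq ((0%R, Epair p.1 p.2) : HGamb) | p <- enum [pred p : gT * gT | involutive_pair p]]>>%VS.

Definition HG_H : {vspace HGamb} := (HG_A + HG_B)%VS.

(* multiplication: that of A, of B, and E_alpha E_beta = V_alpha E_beta,
   E_beta E_alpha = E_beta V_alpha, extended bilinearly *)
Definition HG_mul (x y : HGamb) : HGamb :=
  (cg_mul x.1 y.1, mg_mul x.2 y.2 + mg_mul (Vmap x.1) y.2 + mg_mul x.2 (Vmap y.1)).

Definition HG_f (x : HGamb) : C :=
  (x.1 1%g + \sum_(g : gT) x.2 (g, g)) / (#|gT|%:R).

Definition HG_form (x y : HGamb) : C := HG_f (HG_mul x y).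

Definition HG_star (x : HGamb) : HGamb :=
  ([ffun g => x.1 (g^-1)%g], [ffun p : gT * gT => x.2 (p.2, p.1)]).

End HG.

From HB Require Import structures.
From mathcomp Require Import all_boot all_order all_fingroup all_algebra.
From mathcomp Require Import ring.
Set Implicit Arguments. Unset Strict Implicit. Unset Printing Implicit Defensive.
Import Order.TTheory GRing.Theory Num.Theory.
Local Open Scope ring_scope.

(* A is the space of class functions, and B the space of matrices that are
   invariant under simultaneous conjugation and supported on pairs of
   involutions, so membership in H is a pointwise condition and each axiom is
   a reindexing of sums over G.
   The basis-dependent quantities K_{A,*}, K_{B,*}, V_{K_B} and the right-hand
   side of (4) are computed with dual frames: the orbit sums of g and of (s, t),
   divided by |G|, paired with the orbit sums of g^-1 and of (t, s), satisfy
   x = \sum_k (x, w_k) u_k, and then \sum F^{ij} phi(f_i, f_j) equals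
   \sum_k phi(u_k, w_k) for every bilinear phi.
   U is the sum of squares \sum_g g^2. Both U^2 and K_{A,*} count the
   solutions of a^2 b^2 = h; both (U, b) and (K_{B,*}, b) equal
   |G|^-1 \sum_{a, p} b(p^(a^2), p); and aU is self-adjoint because a class
   function a satisfies a(gh) = a(hg). *)

Section DeltaSums.
Variables (R : pzRingType) (T : finType).

Lemma sum_deltal (t : T) (F : T -> R) : \sum_p (p == t)%:R * F p = F t.
Proof.
by rewrite (bigD1 t) //= eqxx mul1r big1 ?addr0 // => p /negPf ->; rewrite mul0r.
Qed.

Lemma sum_deltar (t : T) (F : T -> R) : \sum_p F p * (p == t)%:R = F t.
Proof.
by rewrite (bigD1 t) //= eqxx mulr1 big1 ?addr0 // => p /negPf ->; rewrite mulr0.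
Qed.

Lemma sum_delta2 (a b : T) (F : T -> T -> R) :
  \sum_s \sum_t F s t * ((s == a) && (t == b))%:R = F a b.
Proof.
under eq_bigr => s _ do under eq_bigr => t _ do rewrite -mulnb natrM mulrA.
by under eq_bigr => s _ do rewrite sum_deltar; rewrite sum_deltar.
Qed.

End DeltaSums.

Section DualFrame.
Variables (K : fieldType) (V : vectType K).

Lemma lin_sumZ (W : lmodType K) (h : V -> W) :
    (forall c x y, h (c *: x + y) = c *: h x + h y) ->
  forall (I : Type) (r : seq I) (P : pred I) (a : I -> K) (x : I -> V),
  h (\sum_(i <- r | P i) a i *: x i) = \sum_(i <- r | P i) a i *: h (x i).
Proof.
move=> hlin I r P a x.
have h0 : h 0 = 0.
  have := hlin 1 0 0; rewrite !scale1r addr0 => h00.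
  by apply/(addrI (h 0)); rewrite addr0 -h00.
by elim/big_rec2: _ => [//|i y1 y2 _ <-]; rewrite hlin.
Qed.

Lemma span_ind (P : V -> Prop) (s : seq V) :
    P 0 -> (forall x y, P x -> P y -> P (x + y)) ->
    (forall k x, P x -> P (k *: x)) -> (forall u, u \in s -> P u) ->
  forall x, x \in <<s>>%VS -> P x.
Proof.
move=> P0 PD PZ Ps x; rewrite span_def big_seq.
pose Q (U : {vspace V}) := forall x, x \in U -> P x.
suff : Q (\sum_(i <- s | i \in s) <[i]>)%VS by apply.
apply: (big_ind Q).
- by move=> y; rewrite memv0 => /eqP ->.
- by move=> U W QU QW y /memv_addP [u uU [w wW ->]]; apply: PD (QU _ uU) (QW _ wW).
- by move=> u us y /vlineP [k ->]; apply/PZ/Ps.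
Qed.

Variables (form : V -> V -> K) (X : {vspace V}) (I : finType) (u w : I -> V).
Hypothesis form_linl : forall c x y z, form (c *: x + y) z = c * form x z + form y z.
Hypothesis form_sym : forall x y, x \in X -> y \in X -> form x y = form y x.
Hypotheses (uX : forall k, u k \in X) (wX : forall k, w k \in X).
Hypothesis expand : forall x, x \in X -> x = \sum_k form x (w k) *: u k.

Local Notation f := (vbasis X).

Lemma invmx_gram_frame : invmx (gram_mx form f) =
  \matrix_(l, m) \sum_k coord f l (w k) * coord f m (u k).
Proof.
have fX i : tnth f i \in X by apply/vbasis_mem/mem_tnth.
have form_suml (J : finType) (a : J -> K) (x : J -> V) y :
    form (\sum_i a i *: x i) y = \sum_i a i * form (x i) y.
  exact: (@lin_sumZ K^o (form^~ y) (fun c x0 y0 => form_linl c x0 y0 y)).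
set M := \matrix_(l, m) _.
suff gramM : gram_mx form f *m M = 1%:M.
  have [G_unit _] := mulmx1_unit gramM.
  by rewrite -[invmx _]mulmx1 -gramM mulmxA mulVmx ?mul1mx.
apply/matrixP => i m; rewrite !mxE.
rewrite -(coord_free i m (basis_free (vbasisP X))) -(tnth_nth 0).
rewrite [in RHS](expand (fX i)) linear_sum /=.
under eq_bigr do rewrite !mxE big_distrr.
rewrite exchange_big /=; apply: eq_bigr => k _.
rewrite linearZ /= form_sym ?wX ?fX // [w k in RHS](coord_vbasis (wX k)).
rewrite form_suml big_distrl /=; apply: eq_bigr => l _.
by rewrite -(tnth_nth 0) form_sym ?fX // mulrCA mulrA.
Qed.

Lemma dual_frame_sum (W : lmodType K) (phi : V -> V -> W) :
    (forall c x y z, phi (c *: x + y) z = c *: phi x z + phi y z) ->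
    (forall c x y z, phi z (c *: x + y) = c *: phi z x + phi z y) ->
  \sum_(i < \dim X) \sum_(j < \dim X)
     invmx (gram_mx form f) i j *: phi (tnth f i) (tnth f j)
  = \sum_k phi (u k) (w k).
Proof.
move=> phi_linl phi_linr.
have coord_tnth (v : V) : v \in X -> v = \sum_(m < \dim X) coord f m v *: tnth f m.
  by move=> vX; rewrite {1}(coord_vbasis vX); apply: eq_bigr => m _; rewrite (tnth_nth 0).
have phi_suml (J : finType) (a : J -> K) (x : J -> V) z :
    phi (\sum_i a i *: x i) z = \sum_i a i *: phi (x i) z.
  exact: (@lin_sumZ W (phi^~ z) (fun c x0 y0 => phi_linl c x0 y0 z)).
have phi_sumr (J : finType) (a : J -> K) (x : J -> V) z :
    phi z (\sum_i a i *: x i) = \sum_i a i *: phi z (x i).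
  exact: (@lin_sumZ W (phi z) (fun c x0 y0 => phi_linr c x0 y0 z)).
have invG_sym : (invmx (gram_mx form f))^T = invmx (gram_mx form f).
  rewrite trmx_inv; congr invmx; apply/matrixP => i j.
  by rewrite !mxE form_sym ?vbasis_mem ?mem_tnth.
rewrite -invG_sym.
under eq_bigr do under eq_bigr do rewrite mxE invmx_gram_frame mxE scaler_suml.
under eq_bigr do rewrite exchange_big /=.
rewrite exchange_big /=; apply: eq_bigr => k _.
rewrite [in RHS](coord_tnth _ (uX k)) phi_suml; apply: eq_bigr => i _.
rewrite [in RHS](coord_tnth _ (wX k)) phi_sumr scaler_sumr; apply: eq_bigr => j _.
by rewrite scalerA mulrC.
Qed.

End DualFrame.

Section GroupAlgebra.
Variables (C : numClosedFieldType) (gT : finGroupType).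
Local Notation CG := (CG C gT).
Local Notation MG := (MG C gT).
Local Notation HGamb := (HGamb C gT).
Local Notation N := (#|gT|%:R : C).
Implicit Types (a b : CG) (m n : MG) (x y z : HGamb).

Lemma scaleCE (c : C) (v : C^o) : c *: v = c * v. Proof. by []. Qed.

Lemma cg_mul_linl c a a' b : cg_mul (c *: a + a') b = c *: cg_mul a b + cg_mul a' b.
Proof.
apply/ffunP => g; rewrite !ffunE; under eq_bigr do rewrite !ffunE.
by rewrite scaleCE mulr_sumr -big_split /=; apply: eq_bigr => h _; rewrite scaleCE; ring.
Qed.

Lemma cg_mul_linr c a a' b : cg_mul b (c *: a + a') = c *: cg_mul b a + cg_mul b a'.
Proof.
apply/ffunP => g; rewrite !ffunE; under eq_bigr do rewrite !ffunE.
by rewrite scaleCE mulr_sumr -big_split /=; apply: eq_bigr => h _; rewrite scaleCE; ring.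
Qed.

Lemma mg_mul_linl c m m' n : mg_mul (c *: m + m') n = c *: mg_mul m n + mg_mul m' n.
Proof.
apply/ffunP => g; rewrite !ffunE; under eq_bigr do rewrite !ffunE.
by rewrite scaleCE mulr_sumr -big_split /=; apply: eq_bigr => h _; rewrite scaleCE; ring.
Qed.

Lemma mg_mul_linr c m m' n : mg_mul n (c *: m + m') = c *: mg_mul n m + mg_mul n m'.
Proof.
apply/ffunP => g; rewrite !ffunE; under eq_bigr do rewrite !ffunE.
by rewrite scaleCE mulr_sumr -big_split /=; apply: eq_bigr => h _; rewrite scaleCE; ring.
Qed.

Lemma Vmap_lin c a a' : Vmap (c *: a + a') = c *: Vmap a + Vmap a'.
Proof.
apply/ffunP => g; rewrite !ffunE; under eq_bigr do rewrite !ffunE.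
by rewrite scaleCE mulr_sumr -big_split /=; apply: eq_bigr => h _; rewrite scaleCE; ring.
Qed.

Lemma mg_mulDl m m' n : mg_mul (m + m') n = mg_mul m n + mg_mul m' n.
Proof. by have := mg_mul_linl 1 m m' n; rewrite !scale1r. Qed.

Lemma mg_mulDr m m' n : mg_mul n (m + m') = mg_mul n m + mg_mul n m'.
Proof. by have := mg_mul_linr 1 m m' n; rewrite !scale1r. Qed.

Lemma cg_mul0l b : cg_mul 0 b = 0.
Proof. by apply/ffunP => g; rewrite !ffunE big1 // => h _; rewrite ffunE mul0r. Qed.

Lemma cg_mul0r b : cg_mul b 0 = 0.
Proof. by apply/ffunP => g; rewrite !ffunE big1 // => h _; rewrite ffunE mulr0. Qed.

Lemma mg_mul0l m : mg_mul 0 m = 0.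
Proof. by apply/ffunP => g; rewrite !ffunE big1 // => h _; rewrite ffunE mul0r. Qed.

Lemma mg_mul0r m : mg_mul m 0 = 0.
Proof. by apply/ffunP => g; rewrite !ffunE big1 // => h _; rewrite ffunE mulr0. Qed.

Lemma Vmap0 : Vmap 0 = 0 :> MG.
Proof. by apply/ffunP => g; rewrite !ffunE big1 // => h _; rewrite ffunE mul0r. Qed.

Lemma eq_conjV (p h g : gT) : (p == h ^ g^-1)%g = (h == p ^ g)%g.
Proof. by rewrite eq_sym (canF_eq (conjgKV g)). Qed.

Lemma mg_mul_Vmapl a m :
  mg_mul (Vmap a) m = [ffun pq => \sum_g a g * m (pq.1 ^ g, pq.2)%g].
Proof.
apply/ffunP => -[p q]; rewrite !ffunE /=.
under eq_bigr do rewrite ffunE /= big_distrl.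
rewrite exchange_big; apply: eq_bigr => g _ /=.
under eq_bigr do rewrite eq_conjV -mulrA.
by rewrite -mulr_sumr sum_deltal.
Qed.

Lemma mg_mul_Vmapr a m :
  mg_mul m (Vmap a) = [ffun pq => \sum_g a g * m (pq.1, pq.2 ^ g^-1)%g].
Proof.
apply/ffunP => -[p q]; rewrite !ffunE /=.
under eq_bigr do rewrite ffunE /= big_distrr.
rewrite exchange_big; apply: eq_bigr => g _ /=.
under eq_bigr do rewrite mulrCA.
by rewrite -mulr_sumr sum_deltar.
Qed.

Lemma Vmap_mul a b : Vmap (cg_mul a b) = mg_mul (Vmap a) (Vmap b).
Proof.
rewrite mg_mul_Vmapl; apply/ffunP => -[p q]; rewrite !ffunE /=.
under eq_bigr do rewrite ffunE big_distrl.
rewrite exchange_big; apply: eq_bigr => h _ /=.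
rewrite ffunE /= mulr_sumr (reindex_inj (mulgI h)) /=.
apply: eq_bigr => k _.
by rewrite mulKg invMg conjgM [in LHS]eq_conjV [in LHS]eq_sym; ring.
Qed.

Lemma cg_mul_assoc a b c : cg_mul a (cg_mul b c) = cg_mul (cg_mul a b) c.
Proof.
apply/ffunP => g; rewrite !ffunE.
under [RHS]eq_bigr do rewrite ffunE big_distrl.
rewrite [RHS]exchange_big; apply: eq_bigr => h _ /=.
rewrite ffunE mulr_sumr [RHS](reindex_inj (mulgI h)) /=.
by apply: eq_bigr => k _; rewrite mulKg invMg !mulgA; ring.
Qed.

Lemma mg_mul_assoc m n o : mg_mul m (mg_mul n o) = mg_mul (mg_mul m n) o.
Proof.
apply/ffunP => -[p q]; rewrite !ffunE /=.
under eq_bigr do rewrite ffunE big_distrr.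
under [RHS]eq_bigr do rewrite ffunE big_distrl.
rewrite [RHS]exchange_big; apply: eq_bigr => h _ /=.
by apply: eq_bigr => k _ /=; ring.
Qed.

Definition mg_trace m : C := \sum_g m (g, g).

Lemma mg_traceC m n : mg_trace (mg_mul m n) = mg_trace (mg_mul n m).
Proof.
rewrite /mg_trace; under eq_bigr do rewrite ffunE.
under [RHS]eq_bigr do rewrite ffunE.
by rewrite [RHS]exchange_big; apply: eq_bigr => g _; apply: eq_bigr => h _; rewrite mulrC.
Qed.

Lemma mg_trace_lin c m n : mg_trace (c *: m + n) = c * mg_trace m + mg_trace n.
Proof. by rewrite /mg_trace mulr_sumr -big_split; apply: eq_bigr => g _; rewrite !ffunE. Qed.

Lemma mg_traceD m n : mg_trace (m + n) = mg_trace m + mg_trace n.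
Proof. by have := mg_trace_lin 1 m n; rewrite scale1r mul1r. Qed.

Lemma HG_mul_linl c x x' y : HG_mul (c *: x + x') y = c *: HG_mul x y + HG_mul x' y.
Proof.
case: x x' y => [x1 x2] [x1' x2'] [y1 y2]; rewrite /HG_mul /=.
congr pair; first exact: cg_mul_linl.
by rewrite Vmap_lin !mg_mul_linl; apply/ffunP => pq; rewrite !ffunE; ring.
Qed.

Lemma HG_mul_linr c x x' y : HG_mul y (c *: x + x') = c *: HG_mul y x + HG_mul y x'.
Proof.
case: x x' y => [x1 x2] [x1' x2'] [y1 y2]; rewrite /HG_mul /=.
congr pair; first exact: cg_mul_linr.
by rewrite Vmap_lin !mg_mul_linr; apply/ffunP => pq; rewrite !ffunE; ring.
Qed.

Lemma HG_mul_assoc x y z : HG_mul x (HG_mul y z) = HG_mul (HG_mul x y) z.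
Proof.
case: x y z => [x1 x2] [y1 y2] [z1 z2]; rewrite /HG_mul /=.
congr pair; first exact: cg_mul_assoc.
rewrite !Vmap_mul !(mg_mulDl, mg_mulDr) !mg_mul_assoc.
by apply/ffunP => pq; rewrite !ffunE; ring.
Qed.

Lemma HG_fE x : HG_f x = (x.1 1%g + mg_trace x.2) / N.
Proof. by []. Qed.

Lemma HG_f_lin c x y : HG_f (c *: x + y) = c * HG_f x + HG_f y.
Proof. by rewrite !HG_fE /= mg_trace_lin !ffunE scaleCE; ring. Qed.

Lemma HG_form_linl c x y z : HG_form (c *: x + y) z = c * HG_form x z + HG_form y z.
Proof. by rewrite /HG_form HG_mul_linl HG_f_lin. Qed.

Lemma HG_form_sym x y : HG_form x y = HG_form y x.
Proof.
case: x y => [x1 x2] [y1 y2]; rewrite /HG_form !HG_fE /= !mg_traceD.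
rewrite (mg_traceC x2) (mg_traceC (Vmap x1)) (mg_traceC x2 (Vmap y1)).
congr (_ / _); rewrite !ffunE (reindex_inj invg_inj) /=.
under eq_bigr do rewrite invgK mulg1.
under [in RHS]eq_bigr do rewrite mulg1.
under eq_bigr do rewrite mulrC.
ring.
Qed.

Lemma HG_form_inv x y z : HG_form (HG_mul x y) z = HG_form x (HG_mul y z).
Proof. by rewrite /HG_form HG_mul_assoc. Qed.

Definition cg_inv a : CG := [ffun g => a g^-1%g].
Definition mg_trmx m : MG := [ffun pq => m (pq.2, pq.1)].

Lemma HG_starE x : HG_star x = (cg_inv x.1, mg_trmx x.2). Proof. by []. Qed.

Lemma cg_inv_mul a b : cg_inv (cg_mul a b) = cg_mul (cg_inv b) (cg_inv a).
Proof.
apply/ffunP => g; rewrite !ffunE [RHS](reindex_inj (mulgI g)) /=.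
by apply: eq_bigr => k _; rewrite !ffunE invMg -mulgA mulVg mulg1 invgK mulrC.
Qed.

Lemma mg_trmx_mul m n : mg_trmx (mg_mul m n) = mg_mul (mg_trmx n) (mg_trmx m).
Proof.
apply/ffunP => -[p q]; rewrite !ffunE /=.
by apply: eq_bigr => h _; rewrite !ffunE mulrC.
Qed.

Lemma mg_trmx_Vmap a : mg_trmx (Vmap a) = Vmap (cg_inv a).
Proof.
apply/ffunP => -[p q]; rewrite !ffunE /= [RHS](reindex_inj invg_inj) /=.
by apply: eq_bigr => g _; rewrite !ffunE invgK eq_conjV.
Qed.

Lemma HG_star_lin c x y : HG_star (c *: x + y) = c *: HG_star x + HG_star y.
Proof. by congr pair; apply/ffunP => g; rewrite !ffunE. Qed.

Lemma HG_star_invol x : HG_star (HG_star x) = x.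
Proof.
by case: x => x1 x2; congr pair; apply/ffunP => g; rewrite !ffunE ?invgK //; case: g.
Qed.

Lemma HG_star_anti x y : HG_star (HG_mul x y) = HG_mul (HG_star y) (HG_star x).
Proof.
case: x y => [x1 x2] [y1 y2]; rewrite /HG_mul !HG_starE /=.
congr pair; first exact: cg_inv_mul.
have mg_trmxD m n : mg_trmx (m + n) = mg_trmx m + mg_trmx n.
  by apply/ffunP => pq; rewrite !ffunE.
rewrite !mg_trmxD !mg_trmx_mul !mg_trmx_Vmap.
by apply/ffunP => pq; rewrite !ffunE; ring.
Qed.

Lemma HG_f_star x : HG_f (HG_star x) = HG_f x.
Proof.
rewrite !HG_fE HG_starE /= ffunE invg1; congr ((_ + _) / _).
by apply: eq_bigr => g _; rewrite ffunE.
Qed.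

Lemma HG_form_star x y : HG_form (HG_star x) (HG_star y) = HG_form x y.
Proof. by rewrite /HG_form -HG_star_anti HG_f_star -/(HG_form y x) HG_form_sym. Qed.

Lemma natr_card_neq0 : N != 0.
Proof. by rewrite pnatr_eq0 -lt0n; apply/card_gt0P; exists 1%g. Qed.

Lemma natr_cardK (c : C) : N * c / N = c.
Proof. by rewrite mulrC mulKf ?natr_card_neq0. Qed.

Lemma sumr_card (c : C) : \sum_(y : gT) c = N * c.
Proof. by rewrite sumr_const (_ : #|xpredT| = #|gT|) // mulr_natl. Qed.

Lemma HG_fst_sum (I : Type) (r : seq I) (P : pred I) (F : I -> HGamb) :
  (\sum_(i <- r | P i) F i).1 = \sum_(i <- r | P i) (F i).1.
Proof. exact: (big_morph fst (id1 := 0) (op1 := +%R)). Qed.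

Lemma HG_snd_sum (I : Type) (r : seq I) (P : pred I) (F : I -> HGamb) :
  (\sum_(i <- r | P i) F i).2 = \sum_(i <- r | P i) (F i).2.
Proof. exact: (big_morph snd (id1 := 0) (op1 := +%R)). Qed.

Lemma HG_scaleE (c : C) x : c *: x = (c *: x.1, c *: x.2). Proof. by []. Qed.

Lemma HG_addE x y : x + y = (x.1 + y.1, x.2 + y.2). Proof. by []. Qed.

(** * The subspaces A, B and H *)

Definition class_fun a := forall g y : gT, a (g ^ y)%g = a g.
Definition conj_invariant m := forall p q y : gT, m (p ^ y, q ^ y)%g = m (p, q).
Definition invol_supported m :=
  forall p q : gT, ~~ involutive_pair (p, q) -> m (p, q) = 0.
Definition invol_ind (s t : gT) : C := (involutive_pair (s, t))%:R.

Lemma involutive_pairE (p q : gT) :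
  involutive_pair (p, q) = (p * p == 1)%g && (q * q == 1)%g.
Proof. by []. Qed.

Lemma involutive_pairJl (p q g : gT) :
  involutive_pair (p ^ g, q)%g = involutive_pair (p, q).
Proof. by rewrite !involutive_pairE -conjMg conjg_eq1. Qed.

Lemma involutive_pairJr (p q g : gT) :
  involutive_pair (p, q ^ g)%g = involutive_pair (p, q).
Proof. by rewrite !involutive_pairE -conjMg conjg_eq1. Qed.

Lemma involutive_pairJ (p q y : gT) :
  involutive_pair (p ^ y, q ^ y)%g = involutive_pair (p, q).
Proof. by rewrite involutive_pairJl involutive_pairJr. Qed.

Lemma invol_indC (s t : gT) : invol_ind t s = invol_ind s t.
Proof. by rewrite /invol_ind !involutive_pairE andbC. Qed.

Lemma invol_indK (s t : gT) (c : C) : invol_ind s t * (invol_ind s t * c) = invol_ind s t * c.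
Proof. by rewrite /invol_ind; case: involutive_pair; rewrite ?mul1r ?mul0r. Qed.

Lemma invol_ind_supported m (s t : gT) :
  invol_supported m -> invol_ind s t * m (s, t) = m (s, t).
Proof.
rewrite /invol_ind; case: (boolP (involutive_pair (s, t))) => [_|st] m_supp.
  by rewrite mul1r.
by rewrite m_supp // mulr0.
Qed.

Lemma mem_classTP (h g : gT) : reflect (exists z : gT, h = g ^ z)%g (h \in g ^: [set: gT])%g.
Proof.
by apply: (iffP imsetP) => [[z _ ->]|[z ->]]; exists z; rewrite ?in_setT.
Qed.

Definition orbit_sum (g : gT) : CG := [ffun h => \sum_y (h == (g ^ y)%g)%:R].

(* The factor [invol_ind s t] puts every [pair_orbit_sum s t] in B. *)
Definition pair_orbit_sum (s t : gT) : MG :=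
  [ffun pq => invol_ind s t * \sum_y ((pq.1 == (s ^ y)%g) && (pq.2 == (t ^ y)%g))%:R].

Lemma class_fun_Eclass g : class_fun (Eclass C g).
Proof.
move=> h y; rewrite !ffunE; congr (nat_of_bool _)%:R.
apply/idP/idP => /mem_classTP [z hz]; apply/mem_classTP.
  by exists (z * y^-1)%g; rewrite conjgM -hz conjgK.
by exists (z * y)%g; rewrite hz conjgM.
Qed.

Lemma class_fun_orbit_sum g : class_fun (orbit_sum g).
Proof.
move=> h y; rewrite !ffunE (reindex_inj (mulIg y)) /=.
by apply: eq_bigr => z _; rewrite conjgM (inj_eq (conjg_inj y)).
Qed.

Lemma orbit_sum_Eclass g : orbit_sum g = orbit_sum g g *: Eclass C g.
Proof.
apply/ffunP => h; rewrite !ffunE.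
case: (boolP (h \in _)) => [/mem_classTP [z ->]|h_notin]; rewrite scaleCE ?mulr1 ?mulr0.
  rewrite (reindex_inj (mulIg z)) /=; apply: eq_bigr => y _.
  by rewrite conjgM (inj_eq (conjg_inj z)).
rewrite big1 // => y _; case: eqP => // hy; case/negP: h_notin; apply/mem_classTP.
by exists y.
Qed.

Lemma class_fun_expansion a : class_fun a -> a = \sum_g (a g / N) *: orbit_sum g.
Proof.
move=> a_class; apply/ffunP => h; rewrite sum_ffunE.
under eq_bigr do rewrite !ffunE scaleCE mulr_sumr.
rewrite exchange_big /=.
under eq_bigr => y _.
  under eq_bigr => g _ do rewrite eq_sym (canF_eq (conjgK y)) mulrC mulrA.
  rewrite -big_distrl /= sum_deltal a_class.
over.
by rewrite /= sumr_card mulrCA mulfV ?natr_card_neq0 ?mulr1.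
Qed.

Lemma mem_HG_A x : x \in HG_A C gT <-> x.2 = 0 /\ class_fun x.1.
Proof.
split.
  move: x; apply: (@span_ind _ _ (fun x : HGamb => x.2 = 0 /\ class_fun x.1)).
  - by split=> // g y; rewrite !ffunE.
  - move=> u v [u2 u_class] [v2 v_class]; split; first by rewrite /= u2 v2 addr0.
    by move=> g y /=; rewrite !ffunE u_class v_class.
  - move=> k u [u2 u_class]; split; first by rewrite /= u2 scaler0.
    by move=> g y /=; rewrite !ffunE u_class.
  - by move=> u /mapP [g _ ->]; split=> //; apply: class_fun_Eclass.
case: x => x1 x2 /= [-> x_class].
have -> : (x1, 0) = \sum_g (x1 g / N) *: ((orbit_sum g, 0) : HGamb).
  rewrite [RHS]surjective_pairing HG_fst_sum HG_snd_sum /=; congr pair.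
    by rewrite {1}(class_fun_expansion x_class).
  by rewrite big1 // => g _; rewrite scaler0.
apply: memv_suml => g _; apply: memvZ.
have -> : ((orbit_sum g, 0) : HGamb) = orbit_sum g g *: ((Eclass C g, 0) : HGamb).
  by rewrite {1}orbit_sum_Eclass HG_scaleE /= scaler0.
by apply/memvZ/memv_span/mapP; exists g; rewrite ?mem_enum.
Qed.

Lemma Epair_invariant (s t : gT) : conj_invariant (Epair C s t).
Proof.
move=> p q y; rewrite !ffunE /=; congr (nat_of_bool _)%:R.
apply/existsP/existsP => -[g /andP [/eqP hp /eqP hq]].
  by exists (g * y^-1)%g; rewrite !conjgM -hp -hq !conjgK !eqxx.
by exists (g * y)%g; rewrite !conjgM hp hq !eqxx.
Qed.

Lemma Epair_supported (s t : gT) : involutive_pair (s, t) -> invol_supported (Epair C s t).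
Proof.
move=> st p q; apply: contraNeq; rewrite ffunE /=.
case: existsP => [[g /andP [/eqP -> /eqP ->]]|] _; last by rewrite eqxx.
by rewrite involutive_pairJ.
Qed.

Lemma pair_orbit_sumJ (s t g : gT) :
  pair_orbit_sum s t (s ^ g, t ^ g)%g = pair_orbit_sum s t (s, t).
Proof.
rewrite !ffunE /= [in LHS](reindex_inj (mulIg g)); congr (_ * _).
by apply: eq_bigr => y _ /=; rewrite !conjgM !(inj_eq (conjg_inj g)).
Qed.

Lemma pair_orbit_sum_mem (s t : gT) : ((0, pair_orbit_sum s t) : HGamb) \in HG_B C gT.
Proof.
case: (boolP (involutive_pair (s, t))) => st; last first.
  suff -> : pair_orbit_sum s t = 0 by apply: mem0v.
  by apply/ffunP => pq; rewrite !ffunE /invol_ind (negPf st) mul0r.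
have -> : ((0, pair_orbit_sum s t) : HGamb) =
          pair_orbit_sum s t (s, t) *: ((0, Epair C s t) : HGamb).
  rewrite HG_scaleE /= scaler0; congr pair; apply/ffunP => -[p q].
  rewrite [in RHS]ffunE scaleCE [Epair _ _ _ _]ffunE /=.
  case: existsP => [[g /andP [/eqP -> /eqP ->]]|not_orbit].
    by rewrite mulr1 pair_orbit_sumJ.
  rewrite mulr0 ffunE big1 ?mulr0 // => y _.
  case: andP => // -[/eqP hp /eqP hq]; case: not_orbit; exists y.
  by rewrite /= -hp -hq !eqxx.
by apply/memvZ/memv_span/mapP; exists (s, t); rewrite ?mem_enum.
Qed.

Lemma invariant_expansion m : conj_invariant m -> invol_supported m ->
  m = \sum_s \sum_t (m (s, t) / N) *: pair_orbit_sum s t.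
Proof.
move=> m_inv m_supp; apply/ffunP => -[p q]; rewrite sum_ffunE.
under eq_bigr do rewrite sum_ffunE.
under eq_bigr => s _ do under eq_bigr => t _ do
  rewrite ffunE ffunE scaleCE mulrCA !mulrA invol_ind_supported // mulr_sumr.
rewrite exchange_big /=.
under eq_bigr => s _ do rewrite exchange_big /=.
rewrite exchange_big /=.
under eq_bigr => y _.
  under eq_bigr => s _ do under eq_bigr => t _ do
    rewrite [p == _]eq_sym [q == _]eq_sym !(canF_eq (conjgK y)).
  rewrite exchange_big /= sum_delta2 m_inv.
over.
by rewrite /= sumr_card mulrCA mulfV ?natr_card_neq0 ?mulr1.
Qed.

Lemma mem_HG_B x :
  x \in HG_B C gT <-> [/\ x.1 = 0, conj_invariant x.2 & invol_supported x.2].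
Proof.
split.
  move: x; apply: (@span_ind _ _
    (fun x : HGamb => [/\ x.1 = 0, conj_invariant x.2 & invol_supported x.2])).
  - by split=> // [p q y|p q _]; rewrite !ffunE.
  - move=> u v [u1 u_inv u_supp] [v1 v_inv v_supp]; split; first by rewrite /= u1 v1 addr0.
      by move=> p q y /=; rewrite !ffunE u_inv v_inv.
    by move=> p q pq /=; rewrite !ffunE u_supp ?v_supp ?addr0.
  - move=> k u [u1 u_inv u_supp]; split; first by rewrite /= u1 scaler0.
      by move=> p q y /=; rewrite !ffunE u_inv.
    by move=> p q pq /=; rewrite !ffunE u_supp ?scaler0.
  - move=> u /mapP [[s t]]; rewrite mem_enum /= => st ->; split=> //.
      exact: Epair_invariant.
    exact: Epair_supported.
case: x => x1 x2 /= [-> x_inv x_supp].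
have -> : (0, x2) = \sum_s \sum_t (x2 (s, t) / N) *: ((0, pair_orbit_sum s t) : HGamb).
  rewrite [RHS]surjective_pairing HG_fst_sum HG_snd_sum /=; congr pair.
    by rewrite big1 // => s _; rewrite HG_fst_sum big1 // => t _; rewrite /= scaler0.
  by rewrite {1}(invariant_expansion x_inv x_supp); apply: eq_bigr => s _; rewrite HG_snd_sum.
by apply: memv_suml => s _; apply: memv_suml => t _; apply/memvZ/pair_orbit_sum_mem.
Qed.

Lemma mem_HG_H x :
  x \in HG_H C gT <-> [/\ class_fun x.1, conj_invariant x.2 & invol_supported x.2].
Proof.
split.
  move=> /memv_addP [u /mem_HG_A [u2 u_class] [v /mem_HG_B [v1 v_inv v_supp] ->]].
  by rewrite /= u2 v1 addr0 add0r.
case: x => x1 x2 /= [x_class x_inv x_supp].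
have -> : ((x1, x2) : HGamb) = (x1, 0) + (0, x2) by rewrite HG_addE /= addr0 add0r.
by apply: memv_add; [apply/mem_HG_A | apply/mem_HG_B].
Qed.

Lemma class_fun_mul a b : class_fun a -> class_fun b -> class_fun (cg_mul a b).
Proof.
move=> a_class b_class g y; rewrite !ffunE (reindex_inj (conjg_inj y)) /=.
by apply: eq_bigr => h _; rewrite -conjVg -conjMg a_class b_class.
Qed.

Lemma class_fun_mulgC a (g h : gT) : class_fun a -> a (g * h)%g = a (h * g)%g.
Proof. by move=> a_class; rewrite -(a_class _ g) conjgE -mulgA mulKg. Qed.

Lemma class_fun_mulC a b : class_fun a -> cg_mul a b = cg_mul b a.
Proof.
move=> a_class; apply/ffunP => g; rewrite !ffunE.
rewrite (reindex_inj (mulgI g)) /= (reindex_inj invg_inj) /=.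
apply: eq_bigr => h _; rewrite invMg invgK -mulgA mulVg mulg1 mulrC; congr (_ * _).
by rewrite -[RHS](a_class _ h^-1%g) conjgE invgK !mulgA mulgV mul1g.
Qed.

Lemma conj_invariantD m n : conj_invariant m -> conj_invariant n -> conj_invariant (m + n).
Proof. by move=> m_inv n_inv p q y; rewrite !ffunE m_inv n_inv. Qed.

Lemma conj_invariant_mul m n :
  conj_invariant m -> conj_invariant n -> conj_invariant (mg_mul m n).
Proof.
move=> m_inv n_inv p q y; rewrite !ffunE /= (reindex_inj (conjg_inj y)) /=.
by apply: eq_bigr => h _; rewrite m_inv n_inv.
Qed.

Lemma conj_invariant_Vmapl a n :
  class_fun a -> conj_invariant n -> conj_invariant (mg_mul (Vmap a) n).
Proof.
move=> a_class n_inv p q y; rewrite mg_mul_Vmapl !ffunE /= (reindex_inj (conjg_inj y)) /=.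
by apply: eq_bigr => g _; rewrite a_class -conjJg n_inv.
Qed.

Lemma conj_invariant_Vmapr a n :
  class_fun a -> conj_invariant n -> conj_invariant (mg_mul n (Vmap a)).
Proof.
move=> a_class n_inv p q y; rewrite mg_mul_Vmapr !ffunE /= (reindex_inj (conjg_inj y)) /=.
by apply: eq_bigr => g _; rewrite a_class -conjVg -conjJg n_inv.
Qed.

Lemma invol_supportedD m n :
  invol_supported m -> invol_supported n -> invol_supported (m + n).
Proof. by move=> m_supp n_supp p q pq; rewrite !ffunE m_supp ?n_supp ?addr0. Qed.

Lemma invol_supported_mul m n :
  invol_supported m -> invol_supported n -> invol_supported (mg_mul m n).
Proof.
move=> m_supp n_supp p q; rewrite involutive_pairE negb_and => pq.
rewrite ffunE big1 // => h _ /=; case/orP: pq => [p_not|q_not].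
  by rewrite m_supp ?mul0r // involutive_pairE negb_and p_not.
by rewrite n_supp ?mulr0 // involutive_pairE negb_and q_not orbT.
Qed.

Lemma invol_supported_Vmapl a n : invol_supported n -> invol_supported (mg_mul (Vmap a) n).
Proof.
move=> n_supp p q pq; rewrite mg_mul_Vmapl ffunE big1 // => g _ /=.
by rewrite n_supp ?mulr0 // involutive_pairJl.
Qed.

Lemma invol_supported_Vmapr a n : invol_supported n -> invol_supported (mg_mul n (Vmap a)).
Proof.
move=> n_supp p q pq; rewrite mg_mul_Vmapr ffunE big1 // => g _ /=.
by rewrite n_supp ?mulr0 // involutive_pairJr.
Qed.

Lemma Vmap_mulC a n : conj_invariant n -> mg_mul (Vmap a) n = mg_mul n (Vmap a).
Proof.
move=> n_inv; rewrite mg_mul_Vmapl mg_mul_Vmapr; apply/ffunP => -[p q]; rewrite !ffunE /=.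
by apply: eq_bigr => g _; rewrite -(n_inv (p ^ g)%g q g^-1%g) conjgK.
Qed.

Lemma HG_mul_AA a b : HG_mul ((a, 0) : HGamb) (b, 0) = (cg_mul a b, 0).
Proof. by rewrite /HG_mul /= !mg_mul0l mg_mul0r !addr0. Qed.

Lemma HG_mul_BB m n : HG_mul ((0, m) : HGamb) (0, n) = (0, mg_mul m n).
Proof. by rewrite /HG_mul /= cg_mul0l Vmap0 mg_mul0l mg_mul0r !addr0. Qed.

Lemma HG_mul_AB a n : HG_mul ((a, 0) : HGamb) (0, n) = (0, mg_mul (Vmap a) n).
Proof. by rewrite /HG_mul /= cg_mul0r Vmap0 mg_mul0l mg_mul0r addr0 add0r. Qed.

Lemma HG_direct_sum :
  (HG_A C gT + HG_B C gT)%VS = HG_H C gT /\ directv (HG_A C gT + HG_B C gT).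
Proof.
split=> //; apply/directv_addP/vspaceP => x; rewrite memv_cap memv0.
apply/andP/eqP => [[/mem_HG_A [x2 _] /mem_HG_B [x1 _ _]]|->]; last by rewrite !mem0v.
by case: x x1 x2 => ? ? /= -> ->.
Qed.

Lemma HG_mul_closed x y : x \in HG_H C gT -> y \in HG_H C gT -> HG_mul x y \in HG_H C gT.
Proof.
case: x y => [x1 x2] [y1 y2] /mem_HG_H [x_class x_inv x_supp] /mem_HG_H [y_class y_inv y_supp].
apply/mem_HG_H; split=> /=.
- exact: class_fun_mul.
- by do !apply: conj_invariantD;
    [apply: conj_invariant_mul | apply: conj_invariant_Vmapl | apply: conj_invariant_Vmapr].
- by do !apply: invol_supportedD;
    [apply: invol_supported_mul | apply: invol_supported_Vmapl | apply: invol_supported_Vmapr].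
Qed.

Lemma HG_A_mul_closed x y : x \in HG_A C gT -> y \in HG_A C gT -> HG_mul x y \in HG_A C gT.
Proof.
case: x y => [x1 x2] [y1 y2] /mem_HG_A [/= -> x_class] /mem_HG_A [/= -> y_class].
by rewrite HG_mul_AA; apply/mem_HG_A; split=> //; apply: class_fun_mul.
Qed.

Lemma HG_A_central x y : x \in HG_A C gT -> y \in HG_H C gT -> HG_mul x y = HG_mul y x.
Proof.
case: x y => [x1 x2] [y1 y2] /mem_HG_A [/= -> x_class] /mem_HG_H [/= _ y_inv _].
rewrite /HG_mul /= class_fun_mulC //.
by rewrite !mg_mul0l !mg_mul0r !add0r addr0 Vmap_mulC.
Qed.

Lemma HG_B_ideal x y : x \in HG_B C gT -> y \in HG_H C gT ->
  HG_mul y x \in HG_B C gT /\ HG_mul x y \in HG_B C gT.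
Proof.
case: x y => [x1 x2] [y1 y2] /mem_HG_B [/= -> x_inv x_supp].
move=> /mem_HG_H [/= y_class y_inv y_supp].
split; apply/mem_HG_B.
- rewrite /HG_mul /= cg_mul0r Vmap0 mg_mul0r addr0; split=> //.
    by apply: conj_invariantD; [apply: conj_invariant_mul | apply: conj_invariant_Vmapl].
  by apply: invol_supportedD; [apply: invol_supported_mul | apply: invol_supported_Vmapl].
- rewrite /HG_mul /= cg_mul0l Vmap0 mg_mul0l addr0; split=> //.
    by apply: conj_invariantD; [apply: conj_invariant_mul | apply: conj_invariant_Vmapr].
  by apply: invol_supportedD; [apply: invol_supported_mul | apply: invol_supported_Vmapr].
Qed.

Definition cg_one : CG := [ffun g => (g == 1%g)%:R].

Lemma cg_mul1l a : cg_mul cg_one a = a.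
Proof.
apply/ffunP => g; rewrite ffunE; under eq_bigr do rewrite ffunE.
by rewrite sum_deltal invg1 mul1g.
Qed.

Lemma cg_mul1r a : cg_mul a cg_one = a.
Proof.
apply/ffunP => g; rewrite ffunE; under eq_bigr do rewrite ffunE -eq_mulVg1.
by rewrite sum_deltar.
Qed.

Lemma mg_mul_Vmap1l m : mg_mul (Vmap cg_one) m = m.
Proof.
rewrite mg_mul_Vmapl; apply/ffunP => -[p q]; rewrite ffunE /=.
by under eq_bigr do rewrite ffunE; rewrite sum_deltal conjg1.
Qed.

Lemma mg_mul_Vmap1r m : mg_mul m (Vmap cg_one) = m.
Proof.
rewrite mg_mul_Vmapr; apply/ffunP => -[p q]; rewrite ffunE /=.
by under eq_bigr do rewrite ffunE; rewrite sum_deltal invg1 conjg1.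
Qed.

Lemma HG_has_unit : exists2 e, e \in HG_A C gT &
  forall x, x \in HG_H C gT -> HG_mul e x = x /\ HG_mul x e = x.
Proof.
exists (cg_one, 0).
  by apply/mem_HG_A; split=> // g y; rewrite !ffunE conjg_eq1.
move=> [x1 x2] _; rewrite /HG_mul /= cg_mul1l cg_mul1r mg_mul_Vmap1l mg_mul_Vmap1r.
by rewrite !mg_mul0l !mg_mul0r !add0r addr0.
Qed.

Definition mg_invol_id : MG := [ffun pq => ((pq.1 == pq.2) && (pq.1 * pq.1 == 1)%g)%:R].

Lemma HG_B_has_unit : exists2 e, e \in HG_B C gT &
  forall x, x \in HG_B C gT -> HG_mul e x = x /\ HG_mul x e = x.
Proof.
exists (0, mg_invol_id).
  apply/mem_HG_B; split=> // [p q y|p q]; rewrite !ffunE /=.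
    by rewrite (inj_eq (conjg_inj y)) -conjMg conjg_eq1.
  case: (p =P q) => [<-|//]; rewrite involutive_pairE andbb => /negPf ->.
  by rewrite andbF.
move=> [x1 x2] /mem_HG_B [/= -> _ x_supp]; rewrite !HG_mul_BB; split; congr pair.
- apply/ffunP => -[p q]; rewrite ffunE /=.
  under eq_bigr do rewrite ffunE /= andbC -mulnb natrM mulrAC [p == _]eq_sym.
  rewrite sum_deltar; case: (boolP (p * p == 1)%g) => [_|p_not]; first by rewrite mul1r.
  by rewrite mul0r x_supp // involutive_pairE (negPf p_not).
- apply/ffunP => -[p q]; rewrite ffunE /=.
  under eq_bigr do rewrite ffunE /= -mulnb natrM mulrA mulrAC.
  rewrite sum_deltar; case: (boolP (q * q == 1)%g) => [_|q_not]; first by rewrite mulr1.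
  by rewrite mulr0 x_supp // involutive_pairE (negPf q_not) andbF.
Qed.

Lemma cg_invK a : cg_inv (cg_inv a) = a.
Proof. by apply/ffunP => g; rewrite !ffunE invgK. Qed.

Lemma mg_trmxK m : mg_trmx (mg_trmx m) = m.
Proof. by apply/ffunP => -[p q]; rewrite !ffunE. Qed.

Lemma cg_inv0 : cg_inv 0 = 0. Proof. by apply/ffunP => g; rewrite !ffunE. Qed.

Lemma mg_trmx0 : mg_trmx 0 = 0. Proof. by apply/ffunP => pq; rewrite !ffunE. Qed.

Lemma class_fun_inv a : class_fun a -> class_fun (cg_inv a).
Proof. by move=> a_class g y; rewrite !ffunE -conjVg a_class. Qed.

Lemma conj_invariant_trmx m : conj_invariant m -> conj_invariant (mg_trmx m).
Proof. by move=> m_inv p q y; rewrite !ffunE /= m_inv. Qed.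

Lemma invol_supported_trmx m : invol_supported m -> invol_supported (mg_trmx m).
Proof.
by move=> m_supp p q pq; rewrite ffunE /= m_supp // !involutive_pairE andbC.
Qed.

Lemma HG_star_closed x : x \in HG_H C gT -> HG_star x \in HG_H C gT.
Proof.
case: x => x1 x2 /mem_HG_H [/= x_class x_inv x_supp]; apply/mem_HG_H; split.
- exact: class_fun_inv.
- exact: conj_invariant_trmx.
- exact: invol_supported_trmx.
Qed.

Lemma HG_star_memA x : x \in HG_H C gT -> (HG_star x \in HG_A C gT) = (x \in HG_A C gT).
Proof.
case: x => x1 x2 /mem_HG_H [/= x_class _ _]; rewrite HG_starE /=.
apply/idP/idP => /mem_HG_A [/= x2_0 _]; apply/mem_HG_A; split=> //.
- by rewrite -(mg_trmxK x2) x2_0 mg_trmx0.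
- by rewrite x2_0 mg_trmx0.
- exact: class_fun_inv.
Qed.

Lemma HG_star_memB x : x \in HG_H C gT -> (HG_star x \in HG_B C gT) = (x \in HG_B C gT).
Proof.
case: x => x1 x2 /mem_HG_H [/= _ x_inv x_supp]; rewrite HG_starE /=.
apply/idP/idP => /mem_HG_B [/= x1_0 _ _]; apply/mem_HG_B; split=> //.
- by rewrite -(cg_invK x1) x1_0 cg_inv0.
- by rewrite x1_0 cg_inv0.
- exact: conj_invariant_trmx.
- exact: invol_supported_trmx.
Qed.

(** * Dual frames of A and B *)

Lemma HG_mulZl c x y : HG_mul (c *: x) y = c *: HG_mul x y.
Proof.
have HG_mul0l : HG_mul 0 y = 0.
  by case: y => y1 y2; rewrite /HG_mul /= cg_mul0l Vmap0 !mg_mul0l !addr0.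
by have := HG_mul_linl c x 0 y; rewrite !addr0 HG_mul0l addr0.
Qed.

Lemma HG_form0l y : HG_form 0 y = 0.
Proof.
have := HG_form_linl 1 0 0 y; rewrite scale1r mul1r addr0 => form00.
by apply/(addrI (HG_form 0 y)); rewrite addr0 -form00.
Qed.

Lemma HG_formZl c x y : HG_form (c *: x) y = c * HG_form x y.
Proof. by have := HG_form_linl c x 0 y; rewrite !addr0 HG_form0l addr0. Qed.

Lemma HG_form_suml (I : finType) (F : I -> HGamb) y :
  HG_form (\sum_i F i) y = \sum_i HG_form (F i) y.
Proof.
elim/big_rec2: _ => [|i y1 y2 _ <-]; first exact: HG_form0l.
by have := HG_form_linl 1 (F i) y2 y; rewrite scale1r mul1r.
Qed.

Lemma HG_form_AA a b : HG_form ((a, 0) : HGamb) (b, 0) = cg_mul a b 1%g / N.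
Proof.
rewrite /HG_form HG_mul_AA HG_fE /= /mg_trace big1 ?addr0 // => g _; exact: ffunE.
Qed.

Lemma HG_form_AB a n : HG_form ((a, 0) : HGamb) (0, n) = mg_trace (mg_mul (Vmap a) n) / N.
Proof. by rewrite /HG_form HG_mul_AB HG_fE /= ffunE add0r. Qed.

Lemma HG_form_BB m n : HG_form ((0, m) : HGamb) (0, n) = mg_trace (mg_mul m n) / N.
Proof. by rewrite /HG_form HG_mul_BB HG_fE /= ffunE add0r. Qed.

Lemma cg_inv_orbit_sum g : cg_inv (orbit_sum g^-1%g) = orbit_sum g.
Proof.
by apply/ffunP => h; rewrite !ffunE; apply: eq_bigr => y _; rewrite conjVg (inj_eq invg_inj).
Qed.

Lemma HG_form_orbit_sum a g : class_fun a ->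
  HG_form ((a, 0) : HGamb) (orbit_sum g^-1%g, 0) = a g.
Proof.
move=> a_class; rewrite HG_form_AA ffunE.
under eq_bigr do rewrite ffunE mulg1 mulr_sumr.
rewrite exchange_big /=.
under eq_bigr => y _.
  under eq_bigr => h _ do rewrite conjVg (inj_eq invg_inj).
  rewrite sum_deltar a_class.
over.
by rewrite sumr_card natr_cardK.
Qed.

Definition frameA g : HGamb := N^-1 *: (orbit_sum g, 0).
Definition dual_frameA g : HGamb := (orbit_sum g^-1%g, 0).

Lemma frameA_mem g : frameA g \in HG_A C gT.
Proof. by apply/memvZ/mem_HG_A; split=> //; apply: class_fun_orbit_sum. Qed.

Lemma dual_frameA_mem g : dual_frameA g \in HG_A C gT.
Proof. by apply/mem_HG_A; split=> //; apply: class_fun_orbit_sum. Qed.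

Lemma frameA_expansion x : x \in HG_A C gT ->
  x = \sum_g HG_form x (dual_frameA g) *: frameA g.
Proof.
case: x => x1 x2 /mem_HG_A [/= -> x_class].
under eq_bigr do rewrite HG_form_orbit_sum // /frameA scalerA.
rewrite [RHS]surjective_pairing HG_fst_sum HG_snd_sum /=; congr pair.
  by rewrite {1}(class_fun_expansion x_class); apply: eq_bigr => g _; rewrite mulrC.
by rewrite big1 // => g _; rewrite scaler0.
Qed.

Lemma HG_A_nondeg x : x \in HG_A C gT ->
  (forall y, y \in HG_A C gT -> HG_form x y = 0) -> x = 0.
Proof.
case: x => x1 x2 /mem_HG_A [/= -> x_class] x_orth; congr pair.
apply/ffunP => g; rewrite ffunE -(HG_form_orbit_sum g x_class).
exact/x_orth/dual_frameA_mem.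
Qed.

Lemma mg_mul_pair_orbit_suml (s t : gT) m : mg_mul (pair_orbit_sum s t) m =
  [ffun pq => invol_ind s t * \sum_y ((pq.1 == (s ^ y)%g)%:R * m ((t ^ y)%g, pq.2))].
Proof.
apply/ffunP => -[p q]; rewrite !ffunE /=.
under eq_bigr do rewrite ffunE /= -mulrA big_distrl /=.
rewrite -mulr_sumr; congr (_ * _); rewrite exchange_big /=; apply: eq_bigr => y _.
under eq_bigr do rewrite -mulnb natrM -mulrA.
by rewrite -mulr_sumr sum_deltal.
Qed.

Lemma mg_mul_pair_orbit_sumr (t s : gT) m : mg_mul m (pair_orbit_sum t s) =
  [ffun pq => invol_ind t s * \sum_z (m (pq.1, (t ^ z)%g) * (pq.2 == (s ^ z)%g)%:R)].
Proof.
apply/ffunP => -[p q]; rewrite !ffunE /=.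
under eq_bigr do rewrite ffunE /= mulrCA big_distrr /=.
rewrite -mulr_sumr; congr (_ * _); rewrite exchange_big /=; apply: eq_bigr => z _.
under eq_bigr do rewrite -mulnb natrM mulrA.
by rewrite -big_distrl /= sum_deltar.
Qed.

Lemma HG_form_pair_orbit_sum m (s t : gT) : conj_invariant m -> invol_supported m ->
  HG_form ((0, m) : HGamb) (0, pair_orbit_sum t s) = m (s, t).
Proof.
move=> m_inv m_supp; rewrite HG_form_BB /mg_trace mg_mul_pair_orbit_sumr.
under eq_bigr do rewrite ffunE /=.
rewrite -mulr_sumr exchange_big /=.
under eq_bigr do rewrite sum_deltar m_inv.
by rewrite sumr_card invol_indC mulrCA invol_ind_supported // natr_cardK.
Qed.

Definition frameB (st : gT * gT) : HGamb := N^-1 *: (0, pair_orbit_sum st.1 st.2).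
Definition dual_frameB (st : gT * gT) : HGamb := (0, pair_orbit_sum st.2 st.1).

Lemma frameB_mem st : frameB st \in HG_B C gT.
Proof. exact/memvZ/pair_orbit_sum_mem. Qed.

Lemma dual_frameB_mem st : dual_frameB st \in HG_B C gT.
Proof. exact: pair_orbit_sum_mem. Qed.

Lemma frameB_expansion x : x \in HG_B C gT ->
  x = \sum_st HG_form x (dual_frameB st) *: frameB st.
Proof.
case: x => x1 x2 /mem_HG_B [/= -> x_inv x_supp].
under eq_bigr do rewrite HG_form_pair_orbit_sum // /frameB scalerA.
rewrite [RHS]surjective_pairing HG_fst_sum HG_snd_sum /=; congr pair.
  by rewrite big1 // => st _; rewrite /= scaler0.
by rewrite {1}(invariant_expansion x_inv x_supp) pair_big.
Qed.

Lemma HG_B_nondeg x : x \in HG_B C gT ->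
  (forall y, y \in HG_B C gT -> HG_form x y = 0) -> x = 0.
Proof.
case: x => x1 x2 /mem_HG_B [/= -> x_inv x_supp] x_orth; congr pair.
apply/ffunP => -[s t]; rewrite ffunE -(HG_form_pair_orbit_sum s t x_inv x_supp).
exact/x_orth/pair_orbit_sum_mem.
Qed.

Local Notation Kstar_ X := (Kstar (@HG_mul C gT) (@HG_form C gT) (@HG_star C gT) X).

Lemma HG_A_frame_sum (W : lmodType C) (phi : HGamb -> HGamb -> W) :
    (forall c x y z, phi (c *: x + y) z = c *: phi x z + phi y z) ->
    (forall c x y z, phi z (c *: x + y) = c *: phi z x + phi z y) ->
  let f := vbasis (HG_A C gT) in
  \sum_(i < \dim (HG_A C gT)) \sum_(j < \dim (HG_A C gT))
     invmx (gram_mx (@HG_form C gT) f) i j *: phi (tnth f i) (tnth f j)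
  = \sum_g phi (frameA g) (dual_frameA g).
Proof.
exact: (dual_frame_sum HG_form_linl (fun x y _ _ => HG_form_sym x y)
  frameA_mem dual_frameA_mem frameA_expansion).
Qed.

Lemma HG_B_frame_sum (W : lmodType C) (phi : HGamb -> HGamb -> W) :
    (forall c x y z, phi (c *: x + y) z = c *: phi x z + phi y z) ->
    (forall c x y z, phi z (c *: x + y) = c *: phi z x + phi z y) ->
  let f := vbasis (HG_B C gT) in
  \sum_(i < \dim (HG_B C gT)) \sum_(j < \dim (HG_B C gT))
     invmx (gram_mx (@HG_form C gT) f) i j *: phi (tnth f i) (tnth f j)
  = \sum_st phi (frameB st) (dual_frameB st).
Proof.
exact: (dual_frame_sum HG_form_linl (fun x y _ _ => HG_form_sym x y)
  frameB_mem dual_frameB_mem frameB_expansion).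
Qed.

Lemma HG_mul_star_linr c x y z :
  HG_mul z (HG_star (c *: x + y)) = c *: HG_mul z (HG_star x) + HG_mul z (HG_star y).
Proof. by rewrite HG_star_lin HG_mul_linr. Qed.

Lemma Kstar_HG_A : Kstar_ (HG_A C gT) = \sum_g HG_mul (frameA g) (HG_star (dual_frameA g)).
Proof.
apply: (HG_A_frame_sum (phi := fun x y => HG_mul x (HG_star y))) => *.
  exact: HG_mul_linl.
exact: HG_mul_star_linr.
Qed.

Lemma Kstar_HG_B : Kstar_ (HG_B C gT) = \sum_st HG_mul (frameB st) (HG_star (dual_frameB st)).
Proof.
apply: (HG_B_frame_sum (phi := fun x y => HG_mul x (HG_star y))) => *.
  exact: HG_mul_linl.
exact: HG_mul_star_linr.
Qed.

Lemma VK_HG_B x : VK (@HG_mul C gT) (@HG_form C gT) (HG_B C gT) x =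
  \sum_st HG_mul (HG_mul (frameB st) x) (dual_frameB st).
Proof.
apply: (HG_B_frame_sum (phi := fun y z => HG_mul (HG_mul y x) z)) => c y y' z.
  by rewrite !HG_mul_linl.
exact: HG_mul_linr.
Qed.

Lemma gram_sum_HG_A x y :
  (let f := vbasis (HG_A C gT) in let F := invmx (gram_mx (@HG_form C gT) f) in
   \sum_(i < \dim (HG_A C gT)) \sum_(j < \dim (HG_A C gT))
      F i j * HG_form (tnth f i) x * HG_form (tnth f j) y)
  = \sum_g HG_form (frameA g) x * HG_form (dual_frameA g) y.
Proof.
rewrite /=; under eq_bigr do under eq_bigr do rewrite -mulrA -scaleCE.
apply: (HG_A_frame_sum (phi := fun u v => (HG_form u x * HG_form v y : C^o)))
  => c u u' v; rewrite HG_form_linl scaleCE; ring.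
Qed.

(** * Traces of products of orbit sums *)

Lemma mg_trmx_pair_orbit_sum (s t : gT) : mg_trmx (pair_orbit_sum t s) = pair_orbit_sum s t.
Proof.
apply/ffunP => -[p q]; rewrite !ffunE /= invol_indC; congr (_ * _).
by apply: eq_bigr => y _; rewrite andbC.
Qed.

Lemma mg_trace_pair_orbit_suml (s t : gT) m :
  mg_trace (mg_mul (pair_orbit_sum s t) m) = invol_ind s t * \sum_y m ((t ^ y)%g, (s ^ y)%g).
Proof.
rewrite /mg_trace mg_mul_pair_orbit_suml.
under eq_bigr do rewrite ffunE /=.
rewrite -mulr_sumr; congr (_ * _); rewrite exchange_big /=.
by apply: eq_bigr => y _; rewrite sum_deltal.
Qed.

Lemma mg_trace_Vmap_orbit_sum g m : conj_invariant m ->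
  mg_trace (mg_mul (Vmap (orbit_sum g)) m) = N * \sum_p m ((p ^ g)%g, p).
Proof.
move=> m_inv; rewrite /mg_trace mg_mul_Vmapl.
under eq_bigr do rewrite ffunE /=.
under eq_bigr do under eq_bigr do rewrite ffunE big_distrl /=.
under eq_bigr do rewrite exchange_big /=.
under eq_bigr do under eq_bigr do rewrite sum_deltal.
rewrite exchange_big /= -sumr_card; apply: eq_bigr => y _.
rewrite (reindex_inj (conjg_inj y)) /=; apply: eq_bigr => p _.
by rewrite -conjJg m_inv.
Qed.

Lemma mg_trace_pair_orbit_sum_sq (s t : gT) m : conj_invariant m ->
  mg_trace (mg_mul (mg_mul (pair_orbit_sum s t) (pair_orbit_sum s t)) m)
  = invol_ind s t * (N * \sum_k ((t == (s ^ k)%g)%:R * m ((t ^ k)%g, s))).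
Proof.
move=> m_inv; rewrite -mg_mul_assoc mg_trace_pair_orbit_suml.
under eq_bigr do rewrite mg_mul_pair_orbit_suml ffunE /=.
rewrite -mulr_sumr invol_indK -sumr_card; congr (_ * _); apply: eq_bigr => y _.
rewrite (reindex_inj (mulIg y)) /=; apply: eq_bigr => k _.
by rewrite !conjgM (inj_eq (conjg_inj y)) m_inv.
Qed.

Lemma mg_trace_pair_orbit_sum_sandwich (s t : gT) m n : conj_invariant m -> conj_invariant n ->
  mg_trace (mg_mul (mg_mul (mg_mul (pair_orbit_sum s t) m) (pair_orbit_sum t s)) n)
  = invol_ind s t * (N * \sum_k m (t, (t ^ k)%g) * n ((s ^ k)%g, s)).
Proof.
move=> m_inv n_inv; rewrite -!mg_mul_assoc mg_trace_pair_orbit_suml.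
have entry p q : mg_mul m (mg_mul (pair_orbit_sum t s) n) (p, q)
    = invol_ind t s * \sum_z m (p, (t ^ z)%g) * n ((s ^ z)%g, q).
  rewrite ffunE /=.
  under eq_bigr do rewrite mg_mul_pair_orbit_suml ffunE /= mulrCA mulr_sumr.
  rewrite -mulr_sumr exchange_big /=; congr (_ * _); apply: eq_bigr => z _.
  by under eq_bigr do rewrite mulrCA; rewrite sum_deltal.
under eq_bigr do rewrite entry invol_indC.
rewrite -mulr_sumr invol_indK -sumr_card; congr (_ * _); apply: eq_bigr => y _.
rewrite (reindex_inj (mulIg y)) /=; apply: eq_bigr => k _.
by rewrite !conjgM m_inv n_inv.
Qed.

(** * The element U *)

Definition sum_squares : CG := [ffun h => \sum_g (g * g == h)%g%:R].

Lemma class_fun_sum_squares : class_fun sum_squares.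
Proof.
move=> h y; rewrite !ffunE (reindex_inj (conjg_inj y)) /=.
by apply: eq_bigr => g _; rewrite -conjMg (inj_eq (conjg_inj y)).
Qed.

Lemma cg_mul_sum_squares a h :
  cg_mul a sum_squares h = \sum_b a (h * (b * b)^-1)%g.
Proof.
rewrite ffunE; under eq_bigr do rewrite ffunE mulr_sumr.
rewrite exchange_big /=; apply: eq_bigr => b _.
under eq_bigr do rewrite -(canF_eq (mulKg _)) (canF_eq (mulgK _)).
by rewrite sum_deltar.
Qed.

Lemma sum_squares_sq h :
  cg_mul sum_squares sum_squares h = \sum_a \sum_b (a * a * (b * b) == h)%g%:R.
Proof.
rewrite cg_mul_sum_squares; under eq_bigr do rewrite ffunE.
under [RHS]eq_bigr do under eq_bigr do rewrite (canF_eq (mulgK _)).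
by rewrite exchange_big.
Qed.

Lemma HG_U_mem : ((sum_squares, 0) : HGamb) \in HG_A C gT.
Proof. by apply/mem_HG_A; split=> //; apply: class_fun_sum_squares. Qed.

(* Conjugating by y^-1 removes y, and g g^z = (g z^-1)^2 z^2. *)
Lemma sum_orbit_sum_sq h : \sum_g N^-1 * cg_mul (orbit_sum g) (orbit_sum g) h =
  \sum_a \sum_b (a * a * (b * b) == h)%g%:R.
Proof.
have orbit_sq g : cg_mul (orbit_sum g) (orbit_sum g) h
    = \sum_y \sum_z ((g ^ y) * (g ^ z) == h)%g%:R.
  rewrite ffunE; under eq_bigr do rewrite ffunE big_distrl /=.
  rewrite exchange_big /=; apply: eq_bigr => y _.
  rewrite sum_deltal ffunE; apply: eq_bigr => z _.
  by rewrite eq_sym -(canF_eq (mulKg _)).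
under eq_bigr do rewrite orbit_sq.
rewrite -mulr_sumr exchange_big /=.
have conj_free (y : gT) : \sum_g \sum_z ((g ^ y) * (g ^ z) == h)%g%:R
    = \sum_g \sum_z (g * (g ^ z) == h)%g%:R :> C.
  rewrite (reindex_inj (conjg_inj y^-1%g)) /=; apply: eq_bigr => g _.
  rewrite (reindex_inj (mulgI y)) /=; apply: eq_bigr => z _.
  by rewrite conjgKV conjgM conjgKV.
under eq_bigr do rewrite conj_free.
rewrite sumr_card mulKf ?natr_card_neq0 // exchange_big /=.
rewrite [RHS]exchange_big /=; apply: eq_bigr => z _.
rewrite (reindex_inj (mulIg z)) /=; apply: eq_bigr => g _.
by rewrite conjgE !mulgA mulgK.
Qed.

Lemma HG_U_sq : HG_mul ((sum_squares, 0) : HGamb) (sum_squares, 0) = Kstar_ (HG_A C gT).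
Proof.
rewrite Kstar_HG_A HG_mul_AA.
have term g : HG_mul (frameA g) (HG_star (dual_frameA g))
    = N^-1 *: ((cg_mul (orbit_sum g) (orbit_sum g), 0) : HGamb).
  by rewrite HG_starE /= cg_inv_orbit_sum mg_trmx0 HG_mulZl HG_mul_AA.
under [RHS]eq_bigr do rewrite term.
rewrite [RHS]surjective_pairing HG_fst_sum HG_snd_sum /=; congr pair.
  apply/ffunP => h; rewrite sum_ffunE sum_squares_sq -sum_orbit_sum_sq.
  by under [RHS]eq_bigr do rewrite ffunE.
by rewrite big1 // => g _; rewrite /= scaler0.
Qed.

Lemma mg_trace_Vmap_sum_squares m :
  mg_trace (mg_mul (Vmap sum_squares) m) = \sum_p \sum_a m ((p ^ (a * a))%g, p).
Proof.
rewrite /mg_trace mg_mul_Vmapl; apply: eq_bigr => p _; rewrite ffunE /=.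
under eq_bigr do rewrite ffunE big_distrl /=.
rewrite exchange_big /=; apply: eq_bigr => a _.
by under eq_bigr do rewrite eq_sym; rewrite sum_deltal.
Qed.

Lemma sum_pair_orbit_sum_sq_trace m : invol_supported m ->
  \sum_s \sum_t invol_ind s t * \sum_k ((t == (s ^ k)%g)%:R * m ((t ^ k)%g, s))
  = \sum_p \sum_a m ((p ^ (a * a))%g, p).
Proof.
move=> m_supp; apply: eq_bigr => s _.
under eq_bigr do rewrite mulr_sumr.
rewrite exchange_big /=; apply: eq_bigr => k _.
under eq_bigr do rewrite mulrCA.
rewrite sum_deltal conjgM (_ : invol_ind s (s ^ k)%g = invol_ind ((s ^ k) ^ k)%g s).
  by rewrite invol_ind_supported.
by rewrite /invol_ind involutive_pairJr !involutive_pairJl.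
Qed.

Lemma HG_U_form x : x \in HG_B C gT ->
  HG_form ((sum_squares, 0) : HGamb) x = HG_form (Kstar_ (HG_B C gT)) x.
Proof.
case: x => x1 m /mem_HG_B [/= -> m_inv m_supp].
rewrite Kstar_HG_B HG_form_suml HG_form_AB mg_trace_Vmap_sum_squares.
have term st : HG_form (HG_mul (frameB st) (HG_star (dual_frameB st))) (0, m)
   = N^-1 * (invol_ind st.1 st.2 *
       \sum_k ((st.2 == (st.1 ^ k)%g)%:R * m ((st.2 ^ k)%g, st.1))).
  rewrite HG_starE /= cg_inv0 mg_trmx_pair_orbit_sum HG_mulZl HG_mul_BB HG_formZl.
  by rewrite HG_form_BB mg_trace_pair_orbit_sum_sq // (mulrCA (invol_ind _ _) N) natr_cardK.
under [RHS]eq_bigr do rewrite term.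
by rewrite -mulr_sumr -(sum_pair_orbit_sum_sq_trace m_supp) pair_big /= mulrC.
Qed.

Lemma sum_pair_orbit_sum_sandwich_trace m n :
    conj_invariant m -> invol_supported m -> invol_supported n ->
  \sum_s \sum_t invol_ind s t * \sum_k m (t, (t ^ k)%g) * n ((s ^ k)%g, s)
  = \sum_g (\sum_p m ((p ^ g)%g, p)) * (\sum_q n ((q ^ g^-1)%g, q)).
Proof.
move=> m_inv m_supp n_supp.
have drop_ind s t k :
    invol_ind s t * (m (t, (t ^ k)%g) * n ((s ^ k)%g, s))
    = m (t, (t ^ k)%g) * n ((s ^ k)%g, s).
  rewrite /invol_ind; case: (boolP (involutive_pair (s, t))) => st; first by rewrite mul1r.
  rewrite mul0r; move: st; rewrite involutive_pairE negb_and => /orP [s_not|t_not].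
    by rewrite n_supp ?mulr0 // involutive_pairJl involutive_pairE negb_and s_not.
  by rewrite m_supp ?mul0r // involutive_pairJr involutive_pairE negb_and t_not.
under eq_bigr do under eq_bigr do rewrite mulr_sumr.
under eq_bigr do under eq_bigr do under eq_bigr do rewrite drop_ind.
transitivity (\sum_k (\sum_t m (t, (t ^ k)%g)) * (\sum_s n ((s ^ k)%g, s))).
  under [RHS]eq_bigr do rewrite big_distrlr /=.
  rewrite [LHS]exchange_big /=; under eq_bigr do rewrite exchange_big /=.
  by rewrite [LHS]exchange_big.
rewrite [RHS](reindex_inj invg_inj) /=; apply: eq_bigr => k _.
rewrite invgK [X in _ = X * _](reindex_inj (conjg_inj k)) /=.
by under [X in _ = X * _]eq_bigr do rewrite conjgK.
Qed.

Lemma HG_cond4 x y : x \in HG_B C gT -> y \in HG_B C gT ->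
  HG_form (VK (@HG_mul C gT) (@HG_form C gT) (HG_B C gT) x) y =
    (let f := vbasis (HG_A C gT) in let F := invmx (gram_mx (@HG_form C gT) f) in
     \sum_(i < \dim (HG_A C gT)) \sum_(j < \dim (HG_A C gT))
        F i j * HG_form (tnth f i) x * HG_form (tnth f j) y).
Proof.
case: x y => [x1 m] [y1 n] /mem_HG_B [/= -> m_inv m_supp] /mem_HG_B [/= -> n_inv n_supp].
rewrite [RHS](gram_sum_HG_A (0, m) (0, n)) VK_HG_B HG_form_suml.
have lhs st : HG_form (HG_mul (HG_mul (frameB st) (0, m)) (dual_frameB st)) (0, n)
    = N^-1 * (invol_ind st.1 st.2 *
        \sum_k m (st.2, (st.2 ^ k)%g) * n ((st.1 ^ k)%g, st.1)).
  rewrite !HG_mulZl !HG_mul_BB HG_formZl HG_form_BB mg_trace_pair_orbit_sum_sandwich //.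
  by rewrite (mulrCA (invol_ind _ _) N) natr_cardK.
have rhs g : HG_form (frameA g) (0, m) * HG_form (dual_frameA g) (0, n)
    = N^-1 * ((\sum_p m ((p ^ g)%g, p)) * (\sum_q n ((q ^ g^-1)%g, q))).
  rewrite HG_formZl !HG_form_AB !mg_trace_Vmap_orbit_sum //.
  by rewrite !natr_cardK mulrA.
under eq_bigr do rewrite lhs.
under [RHS]eq_bigr do rewrite rhs.
by rewrite -!mulr_sumr -(sum_pair_orbit_sum_sandwich_trace m_inv m_supp n_supp) pair_big.
Qed.

Lemma HG_U_star x : x \in HG_A C gT ->
  HG_star (HG_mul x (sum_squares, 0)) = HG_mul x (sum_squares, 0).
Proof.
case: x => x1 x2 /mem_HG_A [/= -> x_class].
rewrite HG_mul_AA HG_starE /= mg_trmx0; congr pair; apply/ffunP => h.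
rewrite [LHS]ffunE !cg_mul_sum_squares; symmetry.
transitivity (\sum_b x1 (b * h * b)%g).
  rewrite (reindex_inj invg_inj) /=; apply: eq_bigr => b _.
  by rewrite invMg !invgK mulgA class_fun_mulgC // mulgA.
transitivity (\sum_u x1 (h^-1 * (u * u))%g).
  rewrite (reindex_inj (mulIg h^-1%g)) /=; apply: eq_bigr => u _.
  by rewrite mulgKV mulgA class_fun_mulgC.
rewrite [RHS](reindex_inj invg_inj) /=; apply: eq_bigr => u _.
by rewrite invMg !invgK.
Qed.

End GroupAlgebra.

Theorem theorem2p2 (C : numClosedFieldType) (gT : finGroupType) :
  exists U : HGamb C gT,
    structure_algebra (@HG_mul C gT) (HG_H C gT) (HG_A C gT) (HG_B C gT)
      (@HG_form C gT) (@HG_star C gT) U.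
Proof.
exists (sum_squares C gT, 0); split=> *.
- exact: HG_direct_sum.
- exact: HG_mul_closed.
- exact: HG_mul_linl.
- exact: HG_mul_linr.
- exact: HG_mul_assoc.
- exact: HG_A_mul_closed.
- exact: HG_A_central.
- exact: HG_has_unit.
- exact: HG_B_ideal.
- exact: HG_B_has_unit.
- exact: HG_form_linl.
- exact: HG_form_sym.
- exact: HG_form_inv.
- exact: HG_A_nondeg.
- exact: HG_B_nondeg.
- exact: HG_star_closed.
- exact: HG_star_lin.
- exact: HG_star_anti.
- exact: HG_star_invol.
- exact: HG_cond4.
- exact: HG_star_memA.
- exact: HG_star_memB.
- exact: HG_form_star.
- exact: HG_U_mem.
- exact: HG_U_sq.
- exact: HG_U_form.
- exact: HG_U_star.
Qed.
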